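(* Let $n \ge 5$. (a) Let $S, S'$ be sets of transpositions in the symmetric group $S_n$, each generating $S_n$. Then the Cayley graphs $\mathrm{Cay}(S_n,S)$ and $\mathrm{Cay}(S_n,S')$ are isomorphic if and only if the transposition graphs $T(S)$ and $T(S')$ are isomorphic. (b) Let $S$ be a set of transpositions generating $S_n$. Then the Cayley graph $\mathrm{Cay}(S_n,S)$ is edge-transitive if and only if the transposition graph $T(S)$ is edge-transitive.
   Context: For a group $H$ and a subset $S \subseteq H$ with $1 \notin S$ and $S = S^{-1}$, the Cayley graph $\mathrm{Cay}(H,S)$ is the simple undirected graph with vertex set $H$ and edge set $\{\{h, sh\} : h \in H, s \in S\}$. For a set $S$ of transpositions in $S_n$, the transposition graph $T(S)$ is the simple graph with vertex set $\{1,\ldots,n\}$ in which $i$ and $j$ are adjacent if and only if $(i,j) \in S$. A graph $X$ is edge-transitive if for any two edges $\{u,v\},\{x,y\}$ of $X$ there is an automorphism $g$ of $X$ with $\{u^g, v^g\} = \{x,y\}$. *)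

From mathcomp Require Import all_boot all_fingroup.
Set Implicit Arguments. Unset Strict Implicit. Unset Printing Implicit Defensive.
Local Open Scope group_scope.

Definition is_transposition (n : nat) (t : 'S_n) : bool :=
  [exists i : 'I_n, exists j : 'I_n, (i != j) && (t == tperm i j)].

Definition transposition_set (n : nat) (S : {set 'S_n}) : Prop :=
  forall t, t \in S -> is_transposition t.

Definition generates_Sn (n : nat) (S : {set 'S_n}) : Prop :=
  <<S>> = [set: 'S_n].

Definition cayley_adj (n : nat) (S : {set 'S_n}) : rel 'S_n :=
  fun h k => k * h^-1 \in S.

(* Transposition graph T(S) on vertex set 'I_n (= {1..n} shifted) *)
Definition transp_adj (n : nat) (S : {set 'S_n}) : rel 'I_n :=
  fun i j => (i != j) && (tperm i j \in S).

Definition graph_iso (T1 T2 : finType) (e1 : rel T1) (e2 : rel T2) : Prop :=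
  exists f : T1 -> T2, bijective f /\ forall x y, e2 (f x) (f y) = e1 x y.

Definition edge_transitive (T : finType) (e : rel T) : Prop :=
  forall u v x y, e u v -> e x y ->
    exists g : T -> T, [/\ bijective g, (forall a b, e (g a) (g b) = e a b) &
      ((g u = x /\ g v = y) \/ (g u = y /\ g v = x))].

From mathcomp Require Import all_boot all_fingroup.
Set Implicit Arguments. Unset Strict Implicit. Unset Printing Implicit Defensive.
Local Open Scope group_scope.

(** Normalising a Cayley isomorphism to fix 1, it maps S, the neighbourhood of 1, onto S'.
    Two distinct transpositions s, t of S are disjoint iff they have exactly one common
    neighbour besides 1 (namely t s), so the isomorphism restricts to an isomorphism of the
    line graphs of T(S) and T(S'). As in Whitney's theorem, the stars of T(S) are recovered
    from the line graph: three pairwise intersecting edges share a vertex iff some edge of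
    T(S) meets an odd number of them, which uses that T(S) is connected and n >= 5. This
    yields a vertex bijection of T(S) onto T(S') inducing the original map on S.
    Conversely, an isomorphism pi of T(S) onto T(S') satisfies S^pi = S', so conjugation
    by pi, composed with translations for edge-transitivity, is a Cayley isomorphism. *)

Section Transpositions.
Variable n : nat.
Implicit Types (s t a b c e w : 'S_n) (i j k l p q x y z v : 'I_n).
Local Notation transp := (@is_transposition n).

Lemma transposition_tperm t : transp t -> exists i j, i != j /\ t = tperm i j.
Proof. by case/existsP=> i /existsP [j /andP [ij /eqP ->]]; exists i, j. Qed.

Lemma transposition_moves t : transp t -> exists i, t i != i.
Proof. by case/transposition_tperm=> i [j [ij ->]]; exists i; rewrite tpermL eq_sym. Qed.

Lemma transpositionK t : transp t -> involutive t.
Proof. by case/transposition_tperm=> i [j [_ ->]]; apply: tpermK. Qed.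

Lemma transpositionV t : transp t -> t^-1 = t.
Proof. by case/transposition_tperm=> i [j [_ ->]]; rewrite tpermV. Qed.

Lemma transposition_mulgg t : transp t -> t * t = 1.
Proof. by case/transposition_tperm=> i [j [_ ->]]; rewrite tperm2. Qed.

Lemma mulg_transpositionK t a : transp t -> a * t * t = a.
Proof. by move=> tt; rewrite -mulgA transposition_mulgg // mulg1. Qed.

Lemma mulg_transposition_eq1 a t : transp t -> (a * t == 1) = (a == t).
Proof. by move=> tt; rewrite -{1}(transpositionV tt) -eq_mulgV1. Qed.

Lemma transposition_movesK t p : transp t -> t p != p -> t (t p) != t p.
Proof. by move=> tt tp; rewrite transpositionK // eq_sym. Qed.

Lemma transposition_tpermE t p : transp t -> t p != p -> t = tperm p (t p).
Proof.
case/transposition_tperm=> i [j [ij ->]].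
by case: tpermP => [->|->|]; rewrite ?eqxx // tpermC.
Qed.

Lemma transposition_movesE t p q : transp t -> t p != p ->
  (t q != q) = (q == p) || (q == t p).
Proof.
move=> tt tp; rewrite {1}(transposition_tpermE tt tp).
case: tpermP => [->|->|/eqP/negPf-> /eqP/negPf->]; rewrite ?eqxx ?orbT //.
by rewrite eq_sym.
Qed.

Lemma transposition_eq_tperm t x y : transp t -> t x != x -> t y != y -> x != y ->
  t = tperm x y.
Proof.
move=> tt tx ty xy; move: ty; rewrite (transposition_movesE y tt tx) eq_sym (negPf xy).
by move/eqP=> ->; apply: transposition_tpermE.
Qed.

Lemma transposition_not_moves3 t x y z : transp t -> x != y -> x != z -> y != z ->
  t x != x -> t y != y -> t z != z -> False.
Proof.
by move=> tt xy xz yz tx ty; rewrite (transposition_eq_tperm tt tx ty xy) tpermD ?eqxx.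
Qed.

Lemma eq_tperm i j k l : i != j -> tperm i j = tperm k l ->
  (i = k /\ j = l) \/ (i = l /\ j = k).
Proof.
move=> ij e; have: tperm k l i = j by rewrite -e tpermL.
have: tperm k l i != i by rewrite -e tpermL eq_sym.
by case: tpermP => [->|->|]; rewrite ?eqxx // => _ ->; [left|right].
Qed.

Definition overlap s t := [exists i, (s i != i) && (t i != i)].

Definition line_adj s t := (s != t) && overlap s t.

Lemma overlapNfix s t i : ~~ overlap s t -> s i != i -> t i = i.
Proof.
by move=> st si; apply/eqP; apply: contraNT st => ti; apply/existsP; exists i; rewrite si.
Qed.

Lemma overlapC s t : overlap s t = overlap t s.
Proof. by apply/existsP/existsP=> -[i]; exists i; rewrite andbC. Qed.

Lemma mul_moves a w m : a m = m -> w m != m -> (a * w) m != m.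
Proof. by rewrite permM => ->. Qed.

Lemma commute_disjoint_transpositions s t : transp s -> ~~ overlap s t -> commute s t.
Proof.
move=> ts st; have [i si] := transposition_moves ts.
have sj := transposition_movesK ts si.
have sJt : s ^ t = s.
  by rewrite (transposition_tpermE ts si) tpermJ (overlapNfix st si) (overlapNfix st sj).
by rewrite /commute conjgC sJt.
Qed.

Lemma transposition_mul_disjoint_fix a s t i : transp s -> transp t -> ~~ overlap s t ->
  s i != i -> a i = i -> a (s i) = s i -> transp (a * (s * t)) -> a = t.
Proof.
move=> ts tt st si ai asi tc.
have sj := transposition_movesK ts si.
have ci : (a * (s * t)) i != i.
  by apply: mul_moves; rewrite // permM (overlapNfix st) // eq_sym.
have cj : (a * (s * t)) (s i) != s i.
  by apply: mul_moves; rewrite // permM transpositionK // (overlapNfix st si) eq_sym.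
have cs : a * (s * t) = s.
  by rewrite (transposition_eq_tperm tc ci cj) -?transposition_tpermE // eq_sym.
have cst := commute_disjoint_transpositions ts st.
by rewrite -[a](mulgK (s * t)) cs invMg !transpositionV // -cst mulgA transposition_mulgg // mul1g.
Qed.

Lemma transposition_mul_disjoint_cross a s t p q : transp a -> transp s -> transp t ->
  ~~ overlap s t -> s p != p -> t q != q -> a p != p -> a q != q ->
  ~~ transp (a * (s * t)).
Proof.
move=> ta ts tt st sp tq ap aq; apply/negP => tc.
have tsp : t p = p := overlapNfix st sp.
have sq : s q = q by apply: (overlapNfix _ tq); rewrite overlapC.
have pq : p != q by apply: contraNneq tq => <-; rewrite tsp.
have ea := transposition_eq_tperm ta ap aq pq.
have sp' := transposition_movesK ts sp.
have tq' := transposition_movesK tt tq.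
have [p_sp p_tq sp_tq] : [/\ p != s p, p != t q & s p != t q].
  split; first by rewrite eq_sym.
    by apply: contraTneq tq' => <-; rewrite tsp eqxx.
  by apply: contraTneq tq' => <-; rewrite (overlapNfix st sp') eqxx.
have q_sp : q != s p by apply: contraTneq sp' => <-; rewrite sq eqxx.
have stq : s (t q) = t q by apply: (overlapNfix _ tq'); rewrite overlapC.
apply: (transposition_not_moves3 tc p_sp p_tq sp_tq); rewrite !permM ea.
- by rewrite tpermL sq eq_sym.
- by rewrite tpermD // transpositionK // tsp.
- by rewrite tpermD 1?[q == _]eq_sym // stq transpositionK // eq_sym.
Qed.

Lemma transposition_mul_disjoint a s t : transp a -> transp s -> transp t ->
  ~~ overlap s t -> transp (a * (s * t)) -> a = s \/ a = t.
Proof.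
move=> ta ts tt st tc.
have [i si] := transposition_moves ts; have [k tk] := transposition_moves tt.
have si' := transposition_movesK ts si.
have tk' := transposition_movesK tt tk.
have [/andP [/eqP ai /eqP asi]|] := boolP ((a i == i) && (a (s i) == s i)).
  by right; apply: (transposition_mul_disjoint_fix ts tt st si ai asi).
have [/andP [/eqP ak /eqP atk] _|] := boolP ((a k == k) && (a (t k) == t k)).
  have ts' : ~~ overlap t s by rewrite overlapC.
  left; apply: (transposition_mul_disjoint_fix tt ts ts' tk ak atk).
  by rewrite -(commute_disjoint_transpositions ts st).
rewrite !negb_and => /orP [aq|aq] /orP [ap|ap]; exfalso; move: tc; apply/negP;
  by apply: (transposition_mul_disjoint_cross ta ts tt st _ _ ap aq).
Qed.

Lemma transposition_eq_at a b p : transp a -> transp b -> a p != p -> a p = b p -> a = b.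
Proof.
move=> ta tb ap e; have bp : b p != p by rewrite -e.
by rewrite (transposition_tpermE ta ap) (transposition_tpermE tb bp) e.
Qed.

Lemma transposition_common_point_uniq a b p q : transp a -> transp b -> a != b ->
  a p != p -> b p != p -> a q != q -> b q != q -> p = q.
Proof.
move=> ta tb ab ap bp aq bq; apply/eqP; apply: contraNT ab => pq.
by rewrite (transposition_eq_tperm ta ap aq pq) (transposition_eq_tperm tb bp bq pq).
Qed.

Lemma overlap_transpositionE e a p : transp a -> a p != p ->
  overlap e a = (e p != p) || (e (a p) != a p).
Proof.
move=> ta ap; apply/existsP/idP => [[i /andP [ei]]|].
  by rewrite (transposition_movesE i ta ap) => /orP [] /eqP <-; rewrite ei ?orbT.
case/orP=> h; [exists p | exists (a p)]; rewrite h //=.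
exact: transposition_movesK.
Qed.

Lemma eq_transpositionE e a p : transp e -> transp a -> a p != p ->
  (e == a) = (e p != p) && (e (a p) != a p).
Proof.
move=> te ta ap; apply/eqP/andP => [->|[ep eap]].
  by rewrite ap transpositionK // eq_sym.
by rewrite (transposition_eq_tperm te ep eap) -?transposition_tpermE // eq_sym.
Qed.

Lemma line_adj_transpositionE e a p : transp e -> transp a -> a p != p ->
  line_adj e a = (e p != p) (+) (e (a p) != a p).
Proof.
move=> te ta ap; rewrite /line_adj (eq_transpositionE te ta ap) (overlap_transpositionE e ta ap).
by case: (e p != p); case: (e (a p) != a p).
Qed.

Lemma overlap_transpositions s t : transp s -> transp t ->
  s != t -> overlap s t -> exists v x y,
  [/\ v != x, v != y, x != y, s = tperm v x & t = tperm v y].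
Proof.
move=> ts tt st /existsP [v /andP [sv tv]]; exists v, (s v), (t v).
rewrite eq_sym sv eq_sym tv -!transposition_tpermE //; split=> //.
by apply: contra_neq st; apply: transposition_eq_at.
Qed.

Lemma tperm_3cycle_moves v x y m : v != x -> v != y -> x != y -> m \in [:: v; x; y] ->
  (tperm v x * tperm v y) m != m /\ (tperm v x * tperm v y) m \in [:: v; x; y].
Proof.
move=> vx vy xy; have yx : y != x by rewrite eq_sym.
rewrite permM !inE => /or3P [] /eqP ->.
- by rewrite tpermL (tpermD vx yx) eqxx orbT eq_sym vx.
- by rewrite tpermR tpermL eqxx !orbT yx.
- by rewrite (tpermD vy xy) tpermR eqxx vy.
Qed.

Lemma transposition_mul_3cycle_out a v x y m o1 o2 : v != x -> v != y -> x != y ->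
  m \in [:: v; x; y] -> a m \notin [:: v; x; y] -> a = tperm m (a m) ->
  o1 \in [:: v; x; y] -> o2 \in [:: v; x; y] -> o1 != o2 -> o1 != m -> o2 != m ->
  ~~ transp (a * (tperm v x * tperm v y)).
Proof.
move=> vx vy xy mL amL ea o1L o2L o12 o1m o2m; apply/negP => tc.
have notin_am o : o \in [:: v; x; y] -> o != a m by move=> oL; apply: contraNneq amL => <-.
have fix_o o : o \in [:: v; x; y] -> o != m -> a o = o.
  by move=> oL om; rewrite ea tpermD // eq_sym ?notin_am.
apply: (transposition_not_moves3 tc o12 (notin_am _ o1L) (notin_am _ o2L)).
- by apply: mul_moves; [apply: fix_o | case: (tperm_3cycle_moves vx vy xy o1L)].
- by apply: mul_moves; [apply: fix_o | case: (tperm_3cycle_moves vx vy xy o2L)].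
rewrite permM {1}ea tpermR; case: (tperm_3cycle_moves vx vy xy mL) => _ wmL.
by apply: contraNneq amL => <-.
Qed.

Lemma transposition_mul_3cycle a v x y : transp a -> v != x -> v != y -> x != y ->
  transp (a * (tperm v x * tperm v y)) ->
  [\/ a = tperm v x, a = tperm v y | a = tperm x y].
Proof.
move=> ta vx vy xy tc; pose L := [:: v; x; y].
have vL : v \in L by rewrite !inE eqxx.
have xL : x \in L by rewrite !inE eqxx orbT.
have yL : y \in L by rewrite !inE eqxx !orbT.
have [m mL am] : exists2 m, m \in L & a m != m.
  case: (boolP [&& a v == v, a x == x & a y == y]) => [|].
    case/and3P=> /eqP av /eqP ax /eqP ay; exfalso.
    have w_moves m : m \in L -> (tperm v x * tperm v y) m != m.
      by move=> mL; case: (tperm_3cycle_moves vx vy xy mL).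
    by apply: (transposition_not_moves3 tc vx vy xy); apply: mul_moves; rewrite ?w_moves.
  by rewrite !negb_and => /or3P [] h; [exists v | exists x | exists y].
have ea := transposition_tpermE ta am.
case: (boolP (a m \in L)) => amL.
  rewrite ea; move: mL amL am; rewrite !inE.
  by case/or3P=> /eqP -> /or3P [] /eqP ->; rewrite ?eqxx // => _;
    [ apply: Or31 | apply: Or32 | apply: Or31; rewrite tpermC
    | apply: Or33 | apply: Or32; rewrite tpermC | apply: Or33; rewrite tpermC].
exfalso; move: tc; apply/negP.
move: (mL); rewrite !inE => /or3P [] /eqP em; rewrite em in mL amL ea.
- by apply: (transposition_mul_3cycle_out vx vy xy mL amL ea xL yL xy); rewrite eq_sym.
- by apply: (transposition_mul_3cycle_out vx vy xy mL amL ea vL yL vy); rewrite // eq_sym.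
- by apply: (transposition_mul_3cycle_out vx vy xy mL amL ea vL xL vx); rewrite // eq_sym.
Qed.

End Transpositions.

Section CayleyCommonNeighbours.
Variables (n : nat) (S : {set 'S_n}).
Hypothesis tS : transposition_set S.
Implicit Types (s t a x y : 'S_n).

Definition common_nbr s t y := cayley_adj S s y && cayley_adj S t y.

Definition unique_second_common_nbr s t := exists x,
  [/\ x != 1, common_nbr s t x & forall y, common_nbr s t y -> y = 1 \/ y = x].

Lemma cayley_adj_transposition s y : is_transposition s -> cayley_adj S s y = (y * s \in S).
Proof. by move=> ts; rewrite /cayley_adj transpositionV. Qed.

Lemma disjoint_unique_second_common_nbr s t : s \in S -> t \in S -> ~~ overlap s t ->
  unique_second_common_nbr s t.
Proof.
move=> sS tS0 st; have ts := tS sS; have tt := tS tS0.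
have cst := commute_disjoint_transpositions ts st.
have s_neq_t : s != t.
  apply: contraNneq st => <-; have [i si] := transposition_moves ts.
  by apply/existsP; exists i; rewrite si.
exists (t * s); split.
- by rewrite mulg_transposition_eq1 // eq_sym.
- rewrite /common_nbr !cayley_adj_transposition // mulg_transpositionK // tS0 /=.
  by rewrite -cst mulg_transpositionK.
move=> y /andP []; rewrite !cayley_adj_transposition // => ysS ytS.
have tc : is_transposition ((y * s) * (s * t)) by rewrite mulgA mulg_transpositionK // tS.
rewrite -(mulg_transpositionK y ts).
have [->|->] := transposition_mul_disjoint (tS ysS) ts tt st tc; last by right.
by left; apply: transposition_mulgg.
Qed.

Lemma overlap_not_unique_second_common_nbr (v x y : 'I_n) : v != x -> v != y -> x != y ->
  tperm v x \in S -> tperm v y \in S ->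
  ~ unique_second_common_nbr (tperm v x) (tperm v y).
Proof.
move=> vx vy xy sS tS0; set s := tperm v x; set t := tperm v y; set u := tperm x y.
have ts : is_transposition s by apply: tS.
have tt : is_transposition t by apply: tS.
have sts : s * t * s = u.
  by rewrite -mulgA -{1}(transpositionV ts) -conjgE tpermJ tpermL tpermD // eq_sym.
have tst : t * s * t = u.
  by rewrite -mulgA -{1}(transpositionV tt) -conjgE tpermJ tpermL tpermD 1?tpermC // eq_sym.
case=> z [z1 /andP []]; rewrite !cayley_adj_transposition // => zs zt uq.
have uS : u \in S.
  have tc : is_transposition (z * s * (s * t)) by rewrite mulgA mulg_transpositionK // tS.
  case: (transposition_mul_3cycle (tS zs) vx vy xy tc) => ea.
  - by move: z1; rewrite -(mulg_transpositionK z ts) ea transposition_mulgg ?eqxx.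
  - by move: zt; rewrite -(mulg_transpositionK z ts) ea tst.
  - by rewrite /u -ea.
have ts_nbr : common_nbr s t (t * s).
  by rewrite /common_nbr !cayley_adj_transposition // mulg_transpositionK // tst uS tS0.
have st_nbr : common_nbr s t (s * t).
  by rewrite /common_nbr !cayley_adj_transposition // mulg_transpositionK // sts uS sS.
have s_t : s != t.
  by apply: contra_neq xy => e; rewrite -(tpermL v x) -(tpermL v y) -/s -/t e.
(* [s t] and [t s] differ: otherwise [u = t s t = s] would move [v]. *)
have st_ts : s * t != t * s.
  have uv : u v == v by rewrite tpermD // eq_sym.
  by apply: contraTneq uv => e; rewrite -tst -e mulg_transpositionK // tpermL eq_sym.
case: (uq _ ts_nbr) => [/eqP|ez]; first by rewrite mulg_transposition_eq1 // eq_sym (negbTE s_t).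
case: (uq _ st_nbr) => [/eqP|]; first by rewrite mulg_transposition_eq1 // (negbTE s_t).
by rewrite -ez; apply/eqP.
Qed.

Lemma unique_second_common_nbrP s t : s \in S -> t \in S -> s != t ->
  unique_second_common_nbr s t <-> ~~ overlap s t.
Proof.
move=> sS tS0 st; split=> [uq|]; last exact: disjoint_unique_second_common_nbr.
apply/negP=> /(overlap_transpositions (tS sS) (tS tS0) st) [v [x [y [vx vy xy es et]]]].
by move: sS tS0 uq; rewrite es et; apply: overlap_not_unique_second_common_nbr.
Qed.

End CayleyCommonNeighbours.

Section CayleyIsomorphism.
Variables (n : nat) (S S' : {set 'S_n}) (g : 'S_n -> 'S_n).
Hypotheses (tS : transposition_set S) (tS' : transposition_set S') (g_bij : bijective g)
  (g_adj : forall a b, cayley_adj S' (g a) (g b) = cayley_adj S a b) (g1 : g 1 = 1).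

Lemma cayley_iso_imset : g @: S = S'.
Proof.
have [h gK hK] := g_bij; apply/setP => s'; apply/imsetP/idP => [[s sS ->]|s'S].
  by move: (g_adj 1 s); rewrite /cayley_adj g1 !invg1 !mulg1 sS.
exists (h s'); last by rewrite hK.
by move: (g_adj 1 (h s')); rewrite /cayley_adj g1 hK !invg1 !mulg1 s'S.
Qed.

Lemma cayley_iso_unique_second_common_nbr s t :
  unique_second_common_nbr S' (g s) (g t) <-> unique_second_common_nbr S s t.
Proof.
have [h gK hK] := g_bij; have g_inj := can_inj gK.
have nbr_g y : common_nbr S' (g s) (g t) (g y) = common_nbr S s t y by rewrite /common_nbr !g_adj.
split=> -[x [x1 cx uq]].
  exists (h x); split; first by apply: contraNneq x1 => e; rewrite -(hK x) e g1.
    by rewrite -nbr_g hK.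
  move=> y; rewrite -nbr_g => /uq [e|e]; [left|right]; apply: g_inj; by rewrite ?g1 ?hK.
exists (g x); split; first by rewrite -g1 (inj_eq g_inj).
  by rewrite nbr_g.
by move=> y; rewrite -(hK y) nbr_g => /uq [->|->]; [left|right].
Qed.

Lemma cayley_iso_line_adj s t : s \in S -> t \in S -> line_adj (g s) (g t) = line_adj s t.
Proof.
move=> sS tS0; have g_inj := bij_inj g_bij.
have gS u : u \in S -> g u \in S' by move=> uS; rewrite -cayley_iso_imset mem_imset.
rewrite /line_adj (inj_eq g_inj); case: eqVneq => //= st.
have gst : g s != g t by rewrite (inj_eq g_inj).
have P := unique_second_common_nbrP tS sS tS0 st.
have P' := unique_second_common_nbrP tS' (gS _ sS) (gS _ tS0) gst.
have Pg := cayley_iso_unique_second_common_nbr s t.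
by apply: negb_inj; apply/idP/idP => [/P'/Pg/P|/P/Pg/P'].
Qed.

End CayleyIsomorphism.

Section LineTriangles.
Variables (n : nat) (S : {set 'S_n}).
Implicit Types (a b c e : 'S_n) (p q r v : 'I_n).

Definition crosses_cuts := forall (C : {set 'I_n}) p q, p \in C -> q \notin C ->
  exists2 s, s \in S & exists2 r, r \in C & s r \notin C.

Lemma generates_crosses_cuts : generates_Sn S -> crosses_cuts.
Proof.
move=> gS C p q pC qC.
suff /exists_inP [s sS /exists_inP [r rC srC]] : [exists s in S, [exists r in C, s r \notin C]].
  by exists s => //; exists r.
apply: contraT => noexit.
have S_stab : S \subset 'N(C | 'P).
  apply/subsetP=> s sS; rewrite !inE /=; apply/subsetP => r rC.
  rewrite inE /= apermE; apply: contraT => srC; case/negP: noexit.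
  by apply/exists_inP; exists s => //; apply/exists_inP; exists r.
have : tperm p q \in 'N(C | 'P).
  by rewrite -gen_subG gS in S_stab; apply: (subsetP S_stab); rewrite inE.
by move/(astabs_act p); rewrite /= apermE tpermL pC (negPf qC).
Qed.

Definition line_triangle a b c :=
  [&& a \in S, b \in S, c \in S, line_adj a b, line_adj a c & line_adj b c].

Definition common_point a b c := [exists v, [&& a v != v, b v != v & c v != v]].

Definition odd_line_nbr a b c :=
  [exists e in S, line_adj e a (+) line_adj e b (+) line_adj e c].

Lemma exists_notin (s : seq 'I_n) : size s < n -> exists q, q \notin s.
Proof.
move=> hs; apply/existsP; rewrite -negb_forall; apply/negP => /forallP h.
have : #|'I_n| <= #|s| by apply: subset_leq_card; apply/subsetP => i _; apply: h.
by rewrite card_ord => /leq_trans/(_ (card_size s)); rewrite leqNgt hs.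
Qed.

Lemma line_adj_cut e a v r (C : {set 'I_n}) : is_transposition e -> is_transposition a ->
  a v != v -> v \in C -> a v \in C -> r \in C -> e r \notin C ->
  line_adj e a = (r == v) || (r == a v).
Proof.
move=> te ta av vC avC rC erC.
have er : e r != r by apply: contraNneq erC => ->.
rewrite /line_adj; have -> /= : e != a.
  by apply: contraNneq erC => ->; rewrite (transposition_tpermE ta av); case: tpermP.
apply/existsP/idP => [[i /andP []]|].
  rewrite (transposition_movesE i te er) (transposition_movesE i ta av).
  case/orP=> /eqP -> //; case/orP=> /eqP e1; by move: erC; rewrite e1 ?vC ?avC.
by move=> h; exists r; rewrite er /= (transposition_movesE r ta av).
Qed.

Hypotheses (tS : transposition_set S) (cS : crosses_cuts) (n_gt4 : 4 < n).

Lemma common_point_odd_line_nbr a b c : line_triangle a b c ->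
  common_point a b c -> odd_line_nbr a b c.
Proof.
case/and3P=> aS bS /and4P [cS0 /andP [ab _] /andP [ac _] /andP [bc _]].
have ta := tS aS; have tb := tS bS; have tc := tS cS0.
case/existsP => v /and3P [av bv cv].
have [xy xz yz] : [/\ a v != b v, a v != c v & b v != c v].
  by split; [move: ab | move: ac | move: bc];
     apply: contra_neq => /transposition_eq_at; apply.
have [vx vy vz] : [/\ v != a v, v != b v & v != c v] by split; rewrite eq_sym.
pose C := [set v; a v; b v; c v].
have [q qC] : exists q, q \notin [:: v; a v; b v; c v] by apply: exists_notin; exact: n_gt4.
have vC : v \in C by rewrite /C !inE eqxx.
have qC' : q \notin C by move: qC; rewrite /C !inE -!orbA.
have [e eS [r rC erC]] := cS vC qC'.
have te := tS eS.
apply/exists_inP; exists e => //.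
rewrite !(line_adj_cut te _ _ vC _ rC erC) ?inE ?eqxx ?orbT //.
move: rC; rewrite !inE -!orbA => /or4P [] /eqP ->;
by rewrite !eqxx ?orbT ?[_ == v]eq_sym ?[b v == a v]eq_sym ?[c v == _]eq_sym
  ?(negbTE vx) ?(negbTE vy) ?(negbTE vz) ?(negbTE xy) ?(negbTE xz) ?(negbTE yz).
Qed.

Lemma odd_line_nbr_common_point a b c : line_triangle a b c ->
  odd_line_nbr a b c -> common_point a b c.
Proof.
case/and3P=> aS bS /and4P [cS0 /andP [ab /existsP [p /andP [ap bp]]] /andP [_ oac] /andP [_ obc]].
have ta := tS aS; have tb := tS bS; have tc := tS cS0.
case/exists_inP=> e eS; apply: contraTT => nc; have te := tS eS.
have cp : c p = p.
  by apply/eqP; apply: contraNT nc => cp; apply/existsP; exists p; rewrite ap bp cp.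
have cy : c (a p) != a p by move: oac; rewrite overlapC (overlap_transpositionE c ta ap) cp eqxx.
have cz : c (b p) != b p by move: obc; rewrite overlapC (overlap_transpositionE c tb bp) cp eqxx.
have yz : a p != b p by apply: contra_neq ab; apply: transposition_eq_at.
have cyz : c (a p) = b p by rewrite (transposition_eq_tperm tc cy cz yz) tpermL.
rewrite (line_adj_transpositionE te ta ap) (line_adj_transpositionE te tb bp).
rewrite (line_adj_transpositionE te tc cy) cyz.
by case: (e p != p); case: (e (a p) != a p); case: (e (b p) != b p).
Qed.

Lemma common_pointE a b c : line_triangle a b c -> common_point a b c = odd_line_nbr a b c.
Proof.
by move=> abc; apply/idP/idP; [apply: common_point_odd_line_nbr | apply: odd_line_nbr_common_point].
Qed.

End LineTriangles.

Section Whitney.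
Variables (n : nat) (S S' : {set 'S_n}) (f : 'S_n -> 'S_n).
Hypotheses (tS : transposition_set S) (tS' : transposition_set S')
  (cS : crosses_cuts S) (cS' : crosses_cuts S') (n_gt4 : 4 < n) (f_inj : injective f)
  (fS : f @: S = S') (f_line_adj : {in S &, forall s t, line_adj (f s) (f t) = line_adj s t}).
Implicit Types (a b c e : 'S_n) (p q r v w : 'I_n).

Lemma f_in s : s \in S -> f s \in S'.
Proof. by move=> sS; rewrite -fS mem_imset. Qed.

Lemma line_triangle_f a b c : line_triangle S a b c -> line_triangle S' (f a) (f b) (f c).
Proof.
case/and3P=> aS bS /and4P [cS0 ab ac bc].
by rewrite /line_triangle !f_in // !f_line_adj // ab ac bc.
Qed.

Lemma odd_line_nbr_f a b c : a \in S -> b \in S -> c \in S ->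
  odd_line_nbr S' (f a) (f b) (f c) = odd_line_nbr S a b c.
Proof.
move=> aS bS cS0; apply/exists_inP/exists_inP => [[e' + h]|[e eS h]].
  rewrite -fS => /imsetP [e eS ee']; exists e => //.
  by move: h; rewrite ee' !f_line_adj.
by exists (f e); rewrite ?f_in // !f_line_adj.
Qed.

Lemma common_point_f a b c : line_triangle S a b c ->
  common_point (f a) (f b) (f c) = common_point a b c.
Proof.
move=> abc; have /and3P [aS bS /andP [cS0 _]] := abc.
rewrite (common_pointE tS' cS' n_gt4 (line_triangle_f abc)).
by rewrite (common_pointE tS cS n_gt4 abc) odd_line_nbr_f.
Qed.

Lemma star_map_of_two_edges a b v : a \in S -> b \in S -> a != b -> a v != v -> b v != v ->
  exists w, forall c, c \in S -> (c v != v) = (f c w != w).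
Proof.
move=> aS bS ab av bv.
have ta := tS aS; have tb := tS bS; have tfa := tS' (f_in aS); have tfb := tS' (f_in bS).
have fab : f a != f b by rewrite (inj_eq f_inj).
have lab : line_adj a b by rewrite /line_adj ab; apply/existsP; exists v; rewrite av bv.
move: (lab); rewrite -f_line_adj // => /andP [_ /existsP [w /andP [faw fbw]]].
exists w => c cS0.
have [-> | ca] := eqVneq c a; first by rewrite av faw.
have [-> | cb] := eqVneq c b; first by rewrite bv fbw.
have fca : f c != f a by rewrite (inj_eq f_inj).
have fcb : f c != f b by rewrite (inj_eq f_inj).
have triangle_c : (c v != v) || (f c w != w) -> line_triangle S a b c.
  rewrite /line_triangle aS bS cS0 lab => /orP [cv|fcw].
    rewrite /line_adj ![_ == c]eq_sym ca cb /=.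
    by apply/andP; split; apply/existsP; exists v; rewrite ?av ?bv cv.
  rewrite -(f_line_adj aS cS0) -(f_line_adj bS cS0) /line_adj ![_ == f c]eq_sym fca fcb /=.
  by apply/andP; split; apply/existsP; exists w; rewrite ?faw ?fbw fcw.
apply/idP/idP => [cv | fcw].
  have : common_point (f a) (f b) (f c).
    by rewrite common_point_f ?triangle_c ?cv //; apply/existsP; exists v; rewrite av bv cv.
  case/existsP=> w' /and3P [faw' fbw' fcw'].
  by rewrite (transposition_common_point_uniq tfa tfb fab faw fbw faw' fbw').
have : common_point a b c.
  rewrite -common_point_f ?triangle_c ?fcw ?orbT //.
  by apply/existsP; exists w; rewrite faw fbw fcw.
case/existsP=> v' /and3P [av' bv' cv'].
by rewrite (transposition_common_point_uniq ta tb ab av bv av' bv').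
Qed.

Lemma star_map_of_leaf a v : a \in S -> a v != v -> {in S, forall c, c v != v -> c = a} ->
  exists w, forall c, c \in S -> (c v != v) = (f c w != w).
Proof.
move=> aS av a_uniq; have ta := tS aS; set x := a v in av *.
have ax := transposition_movesK ta av.
have [q qC] : exists q, q \notin [:: v; x].
  by apply: exists_notin; apply: leq_ltn_trans n_gt4.
have vC : v \in [set v; x] by rewrite !inE eqxx.
have qC' : q \notin [set v; x] by move: qC; rewrite !inE.
have [e eS [r rC erC]] := cS vC qC'; have te := tS eS.
have er : e r != r by apply: contraNneq erC => ->.
have rx : r = x.
  move: rC; rewrite !inE => /orP [] /eqP rr //.
  by move: erC; rewrite (a_uniq e eS) -rr // rr -/x !inE eqxx orbT.
have ea : e != a by apply: contraNneq erC => ->; rewrite rx transpositionK // !inE eqxx.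
have ex : e x != x by rewrite -rx; apply: contraNneq erC => ->.
have [w hw] := star_map_of_two_edges eS aS ea ex ax.
have tfa := tS' (f_in aS); have faw : f a w != w by rewrite -hw.
have faw' := transposition_movesK tfa faw.
(* The leaf [v] is sent to the endpoint of [f a] other than the image [w] of [a v]. *)
exists (f a w) => c cS0; have [-> | ca] := eqVneq c a; first by rewrite av faw'.
have -> : (c v != v) = false.
  by apply/negbTE/negP => cv; move/negP: ca; apply; rewrite (a_uniq c cS0 cv).
apply/esym/negbTE/negP => fcw; have tfc := tS' (f_in cS0).
have fca : f c != f a by rewrite (inj_eq f_inj).
have : line_adj (f c) (f a) by rewrite /line_adj fca; apply/existsP; exists (f a w); rewrite fcw.
rewrite f_line_adj // => /andP [_]; rewrite (overlap_transpositionE c ta av) -/x.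
case/orP=> [cv|cx]; first by case/eqP: ca; apply: a_uniq.
have fcw' : f c w != w by rewrite -hw.
have ww := transposition_common_point_uniq tfc tfa fca fcw' faw fcw faw'.
by move: faw; rewrite {2}ww eqxx.
Qed.

Lemma star_map v : exists w, forall c, c \in S -> (c v != v) = (f c w != w).
Proof.
have [q qv] : exists q, q \notin [:: v] by apply: exists_notin; apply: leq_ltn_trans n_gt4.
have qC : q \notin [set v] by move: qv; rewrite !inE.
have [a aS [r + arC]] := cS (set11 v) qC; rewrite inE => /eqP rv; rewrite rv inE in arC.
case: (boolP [exists b in S, (b != a) && (b v != v)]) => [|no_b].
  by case/exists_inP => b bS /andP [ba bv]; apply: (star_map_of_two_edges bS aS ba bv).
apply: (star_map_of_leaf aS arC) => b bS bv; apply/eqP; apply: contraNT no_b => ba.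
by apply/exists_inP; exists b => //; rewrite ba bv.
Qed.

Lemma star_inj v v' : {in S, forall c, (c v != v) = (c v' != v')} -> v = v'.
Proof.
move=> same; apply/eqP; apply: contraT => vv.
have [q qC] : exists q, q \notin [:: v; v'] by apply: exists_notin; apply: leq_ltn_trans n_gt4.
have vC : v \in [set v; v'] by rewrite !inE eqxx.
have qC' : q \notin [set v; v'] by move: qC; rewrite !inE.
have [c cS0 [r rC crC]] := cS vC qC'; have tc := tS cS0.
have cr : c r != r by apply: contraNneq crC => ->.
have [cv cv'] : c v != v /\ c v' != v'.
  by move: rC cr; rewrite !inE => /orP [] /eqP ->; rewrite ?same // => cv; split; rewrite ?same.
by move: crC; rewrite (transposition_eq_tperm tc cv cv' vv); move: rC; rewrite !inE;
  case/orP=> /eqP ->; rewrite ?tpermL ?tpermR eqxx ?orbT.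
Qed.

Lemma whitney : exists pi : 'I_n -> 'I_n, injective pi /\
  forall i j, i != j -> tperm i j \in S -> f (tperm i j) = tperm (pi i) (pi j).
Proof.
have star v : exists w, [forall c in S, (c v != v) == (f c w != w)].
  by have [w hw] := star_map v; exists w; apply/forall_inP => c cS0; rewrite hw.
pose pi v := xchoose (star v).
have pi_star v c : c \in S -> (c v != v) = (f c (pi v) != pi v).
  by move=> cS0; have /forall_inP /(_ c cS0) /eqP := xchooseP (star v).
have pi_inj : injective pi.
  by move=> v v' e; apply: star_inj => c cS0; rewrite (pi_star v) // (pi_star v') // e.
exists pi; split => // i j ij ijS; have tf := tS' (f_in ijS).
apply: transposition_eq_tperm; rewrite ?(inj_eq pi_inj) // -pi_star //.
  by rewrite tpermL eq_sym.
by rewrite tpermR.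
Qed.

End Whitney.

Section CayleyTransposition.
Variable n : nat.
Implicit Types (S : {set 'S_n}) (g : 'S_n -> 'S_n) (pi : 'I_n -> 'I_n).

Lemma cayley_adj_mulg S a b x : cayley_adj S (a * x) (b * x) = cayley_adj S a b.
Proof. by rewrite /cayley_adj invMg mulgA mulgK. Qed.

Lemma cayley_adj_conjg S a b p : cayley_adj (S :^ p) (a ^ p) (b ^ p) = cayley_adj S a b.
Proof. by rewrite /cayley_adj -conjVg -conjMg memJ_conjg. Qed.

Lemma cayley_iso_normalize S S' g : bijective g ->
  (forall a b, cayley_adj S' (g a) (g b) = cayley_adj S a b) ->
  exists phi, [/\ bijective phi, forall a b, cayley_adj S' (phi a) (phi b) = cayley_adj S a b,
    phi 1 = 1 & forall z, phi z = g z * (g 1)^-1].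
Proof.
case=> h gK hK g_adj; exists (fun z => g z * (g 1)^-1); split=> //.
- by exists (fun z => h (z * g 1)) => z; rewrite ?mulgKV ?gK // hK mulgK.
- by move=> a b; rewrite cayley_adj_mulg.
- by rewrite mulgV.
Qed.

Lemma cayley_iso_tperm S S' phi : transposition_set S -> transposition_set S' ->
  generates_Sn S -> generates_Sn S' -> 4 < n -> bijective phi ->
  (forall a b, cayley_adj S' (phi a) (phi b) = cayley_adj S a b) -> phi 1 = 1 ->
  exists pi, injective pi /\
    forall i j, i != j -> tperm i j \in S -> phi (tperm i j) = tperm (pi i) (pi j).
Proof.
move=> tS tS' gS gS' n_gt4 phi_bij phi_adj phi1.
apply: (whitney tS tS' (generates_crosses_cuts gS) (generates_crosses_cuts gS') n_gt4).
- exact: bij_inj.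
- exact: (cayley_iso_imset phi_bij phi_adj phi1).
- exact: (cayley_iso_line_adj tS tS' phi_bij phi_adj phi1).
Qed.

Lemma transp_adj_tperm_map S S' f pi : transposition_set S -> injective f -> f @: S = S' ->
  injective pi ->
  (forall i j, i != j -> tperm i j \in S -> f (tperm i j) = tperm (pi i) (pi j)) ->
  forall i j, transp_adj S' (pi i) (pi j) = transp_adj S i j.
Proof.
move=> tS f_inj fS pi_inj f_tperm i j; rewrite /transp_adj (inj_eq pi_inj).
have [//|ij /=] := eqVneq i j.
apply/idP/idP => [|ijS]; last by rewrite -f_tperm // -fS mem_imset.
rewrite -fS => /imsetP [s sS es].
have [a [b [ab eab]]] := transposition_tperm (tS _ sS); rewrite eab in sS es.
have pij : pi i != pi j by rewrite (inj_eq pi_inj).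
move: es; rewrite (f_tperm a b ab sS) => /(eq_tperm pij) [] [/pi_inj -> /pi_inj ->] //.
by rewrite tpermC.
Qed.

Lemma transp_iso_conjg S S' pi (pi_inj : injective pi) :
  transposition_set S -> transposition_set S' ->
  (forall i j, transp_adj S' (pi i) (pi j) = transp_adj S i j) -> S :^ perm pi_inj = S'.
Proof.
move=> tS tS' pi_adj; have [rho piK rhoK] := injF_bij pi_inj.
have piV x : (perm pi_inj)^-1 x = rho x.
  by apply: (@perm_inj _ (perm pi_inj)); rewrite permKV permE rhoK.
apply/setP => s; rewrite mem_conjg; apply/idP/idP => sS.
  have [i [j [ij es]]] := transposition_tperm (tS _ sS).
  rewrite -(conjgKV (perm pi_inj) s) es tpermJ !permE.
  by move: (pi_adj i j); rewrite /transp_adj (inj_eq pi_inj) ij -es sS => /andP [].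
have [a [b [ab es]]] := transposition_tperm (tS' _ sS).
move: (pi_adj (rho a) (rho b)); rewrite /transp_adj !rhoK ab -es sS => /esym /andP [_].
by rewrite es tpermJ !piV.
Qed.

End CayleyTransposition.

Section MainResults.
Variable n : nat.
Hypothesis n_gt4 : 4 < n.
Implicit Types (S : {set 'S_n}).

Lemma cayley_iso_transp_iso S S' : transposition_set S -> generates_Sn S ->
  transposition_set S' -> generates_Sn S' ->
  graph_iso (cayley_adj S) (cayley_adj S') -> graph_iso (transp_adj S) (transp_adj S').
Proof.
move=> tS gS tS' gS' [g [g_bij g_adj]].
have [phi [phi_bij phi_adj phi1 _]] := cayley_iso_normalize g_bij g_adj.
have [pi [pi_inj phi_tperm]] := cayley_iso_tperm tS tS' gS gS' n_gt4 phi_bij phi_adj phi1.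
exists pi; split; first exact: injF_bij.
exact: transp_adj_tperm_map tS (bij_inj phi_bij) (cayley_iso_imset phi_bij phi_adj phi1)
  pi_inj phi_tperm.
Qed.

Lemma transp_iso_cayley_iso S S' : transposition_set S -> transposition_set S' ->
  graph_iso (transp_adj S) (transp_adj S') -> graph_iso (cayley_adj S) (cayley_adj S').
Proof.
move=> tS tS' [pi [pi_bij pi_adj]]; have pi_inj := bij_inj pi_bij.
have eS := transp_iso_conjg pi_inj tS tS' pi_adj.
exists (conjg^~ (perm pi_inj)); split; last by move=> a b; rewrite -eS cayley_adj_conjg.
by exists (conjg^~ (perm pi_inj)^-1) => z; rewrite /= ?conjgK ?conjgKV.
Qed.

Lemma cayley_edge_transitive_transp S : transposition_set S -> generates_Sn S ->
  edge_transitive (cayley_adj S) -> edge_transitive (transp_adj S).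
Proof.
move=> tS gS ET u v x y /andP [uv uvS] /andP [xy xyS].
have adj1 s : s \in S -> cayley_adj S 1 s by rewrite /cayley_adj invg1 mulg1.
have [g [g_bij g_adj g_edge]] := ET _ _ _ _ (adj1 _ uvS) (adj1 _ xyS).
have [phi [phi_bij phi_adj phi1 phiE]] := cayley_iso_normalize g_bij g_adj.
have phi_uv : phi (tperm u v) = tperm x y.
  by rewrite phiE; case: g_edge => [[-> ->]|[-> ->]]; rewrite ?invg1 ?mulg1 ?mul1g ?tpermV.
have [pi [pi_inj phi_tperm]] := cayley_iso_tperm tS tS gS gS n_gt4 phi_bij phi_adj phi1.
exists pi; split; first exact: injF_bij.
  exact: transp_adj_tperm_map tS (bij_inj phi_bij) (cayley_iso_imset phi_bij phi_adj phi1)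
    pi_inj phi_tperm.
have puv : pi u != pi v by rewrite (inj_eq pi_inj).
by move: phi_uv; rewrite phi_tperm // => /(eq_tperm puv).
Qed.

Lemma transp_edge_transitive_cayley S : transposition_set S ->
  edge_transitive (transp_adj S) -> edge_transitive (cayley_adj S).
Proof.
move=> tS ET u v x y uv xy.
have [i [j [ij es]]] := transposition_tperm (tS _ uv).
have [k [l [kl es']]] := transposition_tperm (tS _ xy).
have ijS : transp_adj S i j by rewrite /transp_adj ij -es.
have klS : transp_adj S k l by rewrite /transp_adj kl -es'.
have [pi [pi_bij pi_adj pi_edge]] := ET _ _ _ _ ijS klS; have pi_inj := bij_inj pi_bij.
have eS := transp_iso_conjg pi_inj tS tS pi_adj.
have ijJ : tperm i j ^ perm pi_inj = tperm k l.
  by rewrite tpermJ !permE; case: pi_edge => [[-> ->]|[-> ->]] //; rewrite tpermC.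
exists (fun z => (z * u^-1) ^ perm pi_inj * x); split.
- exists (fun z => (z * x^-1) ^ (perm pi_inj)^-1 * u) => z.
    by rewrite mulgK conjgK mulgKV.
  by rewrite mulgK conjgKV mulgKV.
- by move=> a b; rewrite cayley_adj_mulg -{1}eS cayley_adj_conjg cayley_adj_mulg.
- by left; rewrite mulgV conj1g mul1g es ijJ -es' mulgKV.
Qed.

End MainResults.

Theorem theorem1 (n : nat) (hn : 5 <= n) :
  (forall S S' : {set 'S_n},
     transposition_set S -> generates_Sn S ->
     transposition_set S' -> generates_Sn S' ->
     (graph_iso (cayley_adj S) (cayley_adj S') <->
      graph_iso (transp_adj S) (transp_adj S'))) /\
  (forall S : {set 'S_n},
     transposition_set S -> generates_Sn S ->
     (edge_transitive (cayley_adj S) <-> edge_transitive (transp_adj S))).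
Proof.
split=> [S S' tS gS tS' gS' | S tS gS]; split.
- exact: cayley_iso_transp_iso.
- exact: transp_iso_cayley_iso.
- exact: cayley_edge_transitive_transp.
- exact: transp_edge_transitive_cayley.
Qed.
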